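(* Let $(X,d)$ be a geodesic metric space whose metric is convex, and let $(A,B)$ be a pair of compact convex subsets of $X$. Then $(A,B)$ has proximal normal structure.
   Context: A geodesic space is one in which any two points are joined by a geodesic segment; a subset is convex if it contains every geodesic segment joining two of its points. For $t\in[0,1]$, $(1-t)y+tz$ denotes a point on a geodesic segment from $y$ to $z$ at distance $t\,d(y,z)$ from $y$. The metric is convex if $d(x,(1-t)y+tz)\le(1-t)d(x,y)+t\,d(x,z)$ for all $x,y,z\in X$, $t\in[0,1]$ (and all such points). Notation: $\operatorname{dist}(A,B)=\inf\{d(x,y):x\in A,y\in B\}$, $\delta(x,A)=\sup\{d(x,y):y\in A\}$, $\delta(A,B)=\sup\{d(x,y):x\in A,y\in B\}$. A pair $(H_1,H_2)$ is proximal if for every $(a,b)\in H_1\times H_2$ there is $(a',b')\in H_1\times H_2$ with $d(a,b')=d(a',b)=\operatorname{dist}(H_1,H_2)$. A convex pair $(K_1,K_2)$ has proximal normal structure if for every closed bounded convex proximal pair $(H_1,H_2)$ with $H_1\subseteq K_1$, $H_2\subseteq K_2$, $\operatorname{dist}(H_1,H_2)=\operatorname{dist}(K_1,K_2)$ and $\delta(H_1,H_2)>\operatorname{dist}(H_1,H_2)$, there exists $(x_1,x_2)\in H_1\times H_2$ with $\delta(x_1,H_2)<\delta(H_1,H_2)$ and $\delta(x_2,H_1)<\delta(H_1,H_2)$. *)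

From Stdlib Require Import Reals List.
From Coquelicot Require Import Coquelicot.
Open Scope R_scope.

Section MetricDefs.
Context {X : Type} (d : X -> X -> R).

Definition is_metric : Prop :=
  (forall x y, 0 <= d x y) /\
  (forall x y, d x y = 0 <-> x = y) /\
  (forall x y, d x y = d y x) /\
  (forall x y z, d x z <= d x y + d y z).

Definition geodesic (g : R -> X) (y z : X) : Prop :=
  g 0 = y /\ g (d y z) = z /\
  forall s t, 0 <= s <= d y z -> 0 <= t <= d y z -> d (g s) (g t) = Rabs (s - t).

Definition geodesic_space : Prop :=
  forall y z, exists g, geodesic g y z.

(* p is "a" point (1-t)y + tz : a point on some geodesic segment from y to z
   at distance t d(y,z) from y. *)
Definition is_comb (t : R) (y z p : X) : Prop :=
  exists g, geodesic g y z /\ p = g (t * d y z).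

Definition convex_metric : Prop :=
  forall x y z t p, 0 <= t <= 1 -> is_comb t y z p ->
    d x p <= (1 - t) * d x y + t * d x z.

Definition convex_set (C : X -> Prop) : Prop :=
  forall y z g, C y -> C z -> geodesic g y z ->
    forall s, 0 <= s <= d y z -> C (g s).

Definition open_set (U : X -> Prop) : Prop :=
  forall x, U x -> exists eps, 0 < eps /\ forall y, d x y < eps -> U y.

Definition closed_set (C : X -> Prop) : Prop :=
  open_set (fun x => ~ C x).

Definition bounded_set (C : X -> Prop) : Prop :=
  exists r, forall x y, C x -> C y -> d x y <= r.

Definition compact_set (C : X -> Prop) : Prop :=
  forall (I : Type) (U : I -> X -> Prop),
    (forall i, open_set (U i)) ->
    (forall x, C x -> exists i, U i x) ->
    exists l : list I, forall x, C x -> exists i, In i l /\ U i x.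

(* dist(A,B) = inf, delta(x,A) = sup, delta(A,B) = sup, valued in Rbar
   (inf of the empty set is +oo, sup of the empty set is -oo). *)
Definition dist_set (A B : X -> Prop) : Rbar :=
  Glb_Rbar (fun r => exists x y, A x /\ B y /\ r = d x y).

Definition delta_pt (x : X) (A : X -> Prop) : Rbar :=
  Lub_Rbar (fun r => exists y, A y /\ r = d x y).

Definition delta_set (A B : X -> Prop) : Rbar :=
  Lub_Rbar (fun r => exists x y, A x /\ B y /\ r = d x y).

Definition proximal_pair (H1 H2 : X -> Prop) : Prop :=
  forall a b, H1 a -> H2 b ->
    exists a' b', H1 a' /\ H2 b' /\
      Finite (d a b') = dist_set H1 H2 /\ Finite (d a' b) = dist_set H1 H2.

Definition proximal_normal_structure (K1 K2 : X -> Prop) : Prop :=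
  forall H1 H2 : X -> Prop,
    closed_set H1 -> closed_set H2 ->
    bounded_set H1 -> bounded_set H2 ->
    convex_set H1 -> convex_set H2 ->
    proximal_pair H1 H2 ->
    (forall x, H1 x -> K1 x) -> (forall x, H2 x -> K2 x) ->
    dist_set H1 H2 = dist_set K1 K2 ->
    Rbar_lt (dist_set H1 H2) (delta_set H1 H2) ->
    exists x1 x2, H1 x1 /\ H2 x2 /\
      Rbar_lt (delta_pt x1 H2) (delta_set H1 H2) /\
      Rbar_lt (delta_pt x2 H1) (delta_set H1 H2).

End MetricDefs.

From Pilot Require Import Defs.
From Stdlib Require Import Reals List Lra Classical.
From Coquelicot Require Import Coquelicot.
Open Scope R_scope.

(** Let [D = delta(H1,H2) > dist(H1,H2)].  By proximality every [y] of [H2]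
    has a point of [H1] at distance [dist(H1,H2) < D], and by compactness of
    [H2] finitely many points [x_1, ..., x_n] of [H1] already achieve a
    uniform gain: every [y] of [H2] is within [D - eps] of some [x_i].
    Convexity of the metric makes an iterated midpoint [m] of the [x_i] keep a
    fraction of each gain, so [d(m, y) <= D - c eps] for all [y] in [H2], i.e.
    [delta(m, H2) < D].  The same argument with the roles exchanged gives the
    point of [H2]. *)

Section ProximalNormalStructure.

Variables (X : Type) (d : X -> X -> R).
Hypothesis Hmetric : is_metric d.

Lemma dist_sym (x y : X) : d x y = d y x.
Proof. now destruct Hmetric as (_ & _ & Hsym & _). Qed.

Lemma dist_triangle (x y z : X) : d x z <= d x y + d y z.
Proof. now destruct Hmetric as (_ & _ & _ & Htri). Qed.

Lemma dist_ge0 (x y : X) : 0 <= d x y.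
Proof. now destruct Hmetric as (Hnn & _). Qed.

Lemma open_ball_below (x : X) (r : R) : Defs.open_set d (fun y => d x y < r).
Proof.
  intros y Hy. exists (r - d x y). split; [lra|].
  intros z Hz. pose proof (dist_triangle x y z). lra.
Qed.

Lemma closed_subset_compact (K Q : X -> Prop) :
  compact_set d K -> Defs.closed_set d Q -> (forall y, Q y -> K y) -> compact_set d Q.
Proof.
  intros HK HQ HQK I U HU Hcover.
  set (V := fun (o : option I) y =>
              match o with Some i => U i y | None => ~ Q y end).
  destruct (HK (option I) V) as [l Hl].
  - intros [i|]; [apply HU | apply HQ].
  - intros y _. destruct (classic (Q y)) as [Qy|nQy].
    + destruct (Hcover y Qy) as [i Hi]. now exists (Some i).
    + now exists None.
  - exists (flat_map (fun o => match o with Some i => i :: nil | None => nil end) l).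
    intros y Qy. destruct (Hl y (HQK y Qy)) as [[i|] [Hin Hy]]; [|contradiction].
    exists i. split; [|exact Hy].
    apply in_flat_map. exists (Some i). split; [exact Hin | now left].
Qed.

Lemma compact_uniform_strict_bound (P Q : X -> Prop) (D : R) :
  compact_set d Q ->
  (forall y, Q y -> exists x, P x /\ d x y < D) ->
  exists (L : list X) (eps : R), (forall x, In x L -> P x) /\ 0 < eps /\
    forall y, Q y -> exists x, In x L /\ d x y <= D - eps.
Proof.
  intros HQ Hstrict.
  set (U := fun (i : {x | P x} * nat) y =>
              d (proj1_sig (fst i)) y < D - / (INR (snd i) + 1)).
  destruct (HQ _ U) as [l Hl].
  - intros i. apply open_ball_below.
  - intros y Qy. destruct (Hstrict y Qy) as [x [Px Hxy]].
    destruct (archimed_cor1 (D - d x y)) as [N [HN HN0]]; [lra|].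
    exists (exist P x Px, N). unfold U; simpl.
    assert (/ (INR N + 1) < / INR N).
    { apply lt_0_INR in HN0. apply Rinv_lt_contravar; nra. }
    lra.
  - set (N := list_max (map snd l)).
    assert (HN : forall i, In i l -> (snd i <= N)%nat).
    { intros i Hi. pose proof (proj1 (list_max_le (map snd l) N) (le_n N)) as Hmax.
      rewrite List.Forall_forall in Hmax. apply Hmax, in_map, Hi. }
    exists (map (fun i => proj1_sig (fst i)) l), (/ (INR N + 1)). split; [|split].
    + intros x Hx. apply in_map_iff in Hx.
      destruct Hx as [i [<- _]]. apply proj2_sig.
    + apply Rinv_0_lt_compat. pose proof (pos_INR N). lra.
    + intros y Qy. destruct (Hl y Qy) as [i [Hin Hy]].
      exists (proj1_sig (fst i)).
      split; [exact (in_map (fun j => proj1_sig (fst j)) l i Hin)|].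
      assert (/ (INR N + 1) <= / (INR (snd i) + 1)).
      { apply Rinv_le_contravar; [pose proof (pos_INR (snd i)); lra|].
        apply Rplus_le_compat_r, le_INR, HN, Hin. }
      unfold U in Hy. lra.
Qed.

Hypotheses (Hgeod : geodesic_space d) (Hconv : convex_metric d).

Lemma exists_midpoint_le (P : X -> Prop) (x z : X) :
  convex_set d P -> P x -> P z ->
  exists p, P p /\ forall y, d p y <= (d x y + d z y) / 2.
Proof.
  intros HPv Px Pz. destruct (Hgeod x z) as [g Hg].
  exists (g (/ 2 * d x z)). split.
  - apply (HPv x z g Px Pz Hg). pose proof (dist_ge0 x z). lra.
  - intros y. rewrite (dist_sym _ y), (dist_sym x y), (dist_sym z y).
    assert (Hc : d y (g (/ 2 * d x z)) <= (1 - / 2) * d y x + / 2 * d y z).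
    { apply Hconv; [lra|]. now exists g. }
    lra.
Qed.

(* Halving the gain at each midpoint keeps a fixed fraction [c] of every
   gain realised by a point of the list. *)
Lemma convex_point_shares_gains (P : X -> Prop) (D : R) (L : list X) :
  convex_set d P -> (exists x, P x) -> (forall x, In x L -> P x) ->
  exists m c, P m /\ 0 < c <= 1 /\
    forall y x e, (forall z, P z -> d z y <= D) -> In x L -> 0 <= e ->
      d x y <= D - e -> d m y <= D - c * e.
Proof.
  intros HPv [x0 Px0]. induction L as [|x L IH]; intros HL.
  - exists x0, 1. split; [exact Px0 | split; [lra | intros y x e _ []]].
  - destruct (IH (fun z Hz => HL z (or_intror Hz))) as [m [c [Pm [Hc Hm]]]].
    pose proof (HL x (or_introl eq_refl)) as Px.
    destruct (exists_midpoint_le P x m HPv Px Pm) as [p [Pp Hp]].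
    exists p, (c / 2). split; [exact Pp | split; [lra|]].
    intros y z e HD [<-|Hin] He Hz; pose proof (Hp y);
      pose proof (HD _ Px); pose proof (HD _ Pm).
    + assert (c * e <= e) by nra. lra.
    + pose proof (Hm y z e HD Hin He Hz). lra.
Qed.

Lemma convex_point_uniformly_closer (P Q : X -> Prop) (D : R) :
  convex_set d P -> (exists x, P x) -> compact_set d Q ->
  (forall x y, P x -> Q y -> d x y <= D) ->
  (forall y, Q y -> exists x, P x /\ d x y < D) ->
  exists m r, P m /\ r < D /\ forall y, Q y -> d m y <= r.
Proof.
  intros HPv HPne HQ HD Hstrict.
  destruct (compact_uniform_strict_bound P Q D HQ Hstrict)
    as [L [eps [HL [Heps Hcover]]]].
  destruct (convex_point_shares_gains P D L HPv HPne HL)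
    as [m [c [Pm [Hc Hm]]]].
  exists m, (D - c * eps). split; [exact Pm | split; [nra|]].
  intros y Qy. destruct (Hcover y Qy) as [x [Hin Hx]].
  apply (Hm y x eps); auto; lra.
Qed.

End ProximalNormalStructure.

Lemma Lub_Rbar_le_ub (E : R -> Prop) (r : R) :
  (forall x, E x -> x <= r) -> Rbar_le (Lub_Rbar E) r.
Proof. intros H. apply (proj2 (Lub_Rbar_correct E)). exact H. Qed.

Lemma delta_set_ub (X : Type) (d : X -> X -> R) (H1 H2 : X -> Prop) (D : R) :
  delta_set d H1 H2 = Finite D -> forall x y, H1 x -> H2 y -> d x y <= D.
Proof.
  intros HD x y Hx Hy.
  pose proof (proj1 (Lub_Rbar_correct (fun r => exists x y, H1 x /\ H2 y /\ r = d x y)))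
    as Hub.
  unfold delta_set in HD. rewrite HD in Hub. apply (Hub (d x y)). eauto.
Qed.

(* A strict inequality [dist < delta] rules out [delta = -oo], i.e. an empty
   side, and boundedness rules out [+oo]. *)
Lemma delta_set_finite (X : Type) (d : X -> X -> R) (H1 H2 : X -> Prop) :
  is_metric d -> bounded_set d H1 -> bounded_set d H2 ->
  Rbar_lt (dist_set d H1 H2) (delta_set d H1 H2) ->
  (exists x, H1 x) /\ (exists y, H2 y) /\ exists D, delta_set d H1 H2 = Finite D.
Proof.
  intros Hmetric [r1 Hr1] [r2 Hr2] Hlt.
  assert (Hne : exists x0 y0, H1 x0 /\ H2 y0).
  { apply NNPP. intros Hempty.
    assert (Hbot : Rbar_le (delta_set d H1 H2) m_infty).
    { apply (proj2 (Lub_Rbar_correct _)).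
      intros r (x & y & Hx & Hy & _). exfalso. eauto. }
    pose proof (Rbar_lt_le_trans _ _ _ Hlt Hbot).
    destruct (dist_set d H1 H2); simpl in *; auto. }
  destruct Hne as (x0 & y0 & Hx0 & Hy0).
  split; [now exists x0 | split; [now exists y0|]].
  assert (Hub : Rbar_le (delta_set d H1 H2) (r1 + d x0 y0 + r2)).
  { apply Lub_Rbar_le_ub. intros r (x & y & Hx & Hy & ->).
    pose proof (Hr1 x x0 Hx Hx0). pose proof (Hr2 y0 y Hy0 Hy).
    pose proof (dist_triangle X d Hmetric x x0 y).
    pose proof (dist_triangle X d Hmetric x0 y0 y). lra. }
  destruct (delta_set d H1 H2) as [D| |]; [eauto | contradiction |].
  destruct (dist_set d H1 H2); contradiction.
Qed.

Lemma delta_pt_lt (X : Type) (d : X -> X -> R) (m : X) (Q : X -> Prop) (r D : R) :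
  (forall y, Q y -> d m y <= r) -> r < D -> Rbar_lt (delta_pt d m Q) D.
Proof.
  intros Hr HrD. apply Rbar_le_lt_trans with (Finite r); [|exact HrD].
  apply Lub_Rbar_le_ub. now intros s (y & Hy & ->); apply Hr.
Qed.

Theorem mainTheorem8 (X : Type) (d : X -> X -> R)
  (Hmetric : is_metric d) (Hgeod : geodesic_space d) (Hconv : convex_metric d)
  (A B : X -> Prop)
  (HAc : compact_set d A) (HBc : compact_set d B)
  (HAv : convex_set d A) (HBv : convex_set d B) :
  proximal_normal_structure d A B.
Proof.
  intros H1 H2 HC1 HC2 HB1 HB2 HV1 HV2 Hprox HS1 HS2 _ Hlt.
  destruct (delta_set_finite X d H1 H2 Hmetric HB1 HB2 Hlt)
    as (Hne1 & Hne2 & D & HD).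
  pose proof (delta_set_ub X d H1 H2 D HD) as Hbound.
  rewrite HD in Hlt |- *.
  destruct (convex_point_uniformly_closer X d Hmetric Hgeod Hconv H1 H2 D)
    as (m1 & r1 & Hm1 & Hr1 & Hd1); auto.
  { now apply (closed_subset_compact X d B). }
  { intros y Hy. destruct Hne1 as [x0 Hx0].
    destruct (Hprox x0 y Hx0 Hy) as (a & _ & Ha & _ & _ & Hdist).
    exists a. split; [exact Ha|]. now rewrite <- Hdist in Hlt. }
  destruct (convex_point_uniformly_closer X d Hmetric Hgeod Hconv H2 H1 D)
    as (m2 & r2 & Hm2 & Hr2 & Hd2); auto.
  { now apply (closed_subset_compact X d A). }
  { intros y x Hy Hx. rewrite dist_sym; auto. }
  { intros x Hx. destruct Hne2 as [y0 Hy0].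
    destruct (Hprox x y0 Hx Hy0) as (_ & b & _ & Hb & Hdist & _).
    exists b. split; [exact Hb|]. rewrite dist_sym; [|exact Hmetric].
    now rewrite <- Hdist in Hlt. }
  exists m1, m2. repeat split; auto; eapply delta_pt_lt; eauto.
Qed.
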